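(* Let $X$ be a non-empty complete computable metric space. Then $\mathsf{BCT}_X\equiv_W\mathsf{C_{\mathbb N}}$.
   Context: A represented space is a pair $(X,\delta_X)$ with $\delta_X:\subseteq\mathbb N^{\mathbb N}\to X$ a partial surjection. For a partial multi-valued map $f:\subseteq X\rightrightarrows Y$ between represented spaces, a realizer of $f$ is a partial function $F:\subseteq\mathbb N^{\mathbb N}\to\mathbb N^{\mathbb N}$ with $\delta_Y(F(p))\in f(\delta_X(p))$ for all $p\in\mathrm{dom}(f\circ\delta_X)$. We write $f\le_W g$ (Weihrauch reducibility) if there are computable partial functions $H,K:\subseteq\mathbb N^{\mathbb N}\to\mathbb N^{\mathbb N}$ such that for every realizer $G$ of $g$ the function $p\mapsto H\langle p,G(K(p))\rangle$ is a realizer of $f$, where $\langle\cdot,\cdot\rangle$ is a standard computable pairing on $\mathbb N^{\mathbb N}$. $\equiv_W$ is the induced equivalence. For a computable metric space $X$, $\mathcal A_-(X)$ is the set of closed subsets of $X$, where a name of $A$ is an enumeration of rational open balls (centers from the dense sequence, rational radii) whose union is $X\setminus A$; for $X=\mathbb N$: $p$ names $A$ iff $\mathbb N\setminus A=\{n:n+1\in\mathrm{range}(p)\}$. Sequences in $\mathcal A_-(X)^{\mathbb N}$ are represented by tupling names. $\mathsf{C_{\mathbb N}}:\subseteq\mathcal A_-(\mathbb N)\rightrightarrows\mathbb N$, $A\mapsto A$, on non-empty $A$. $\mathsf{BCT}_X:\subseteq\mathcal A_-(X)^{\mathbb N}\rightrightarrows\mathbb N$, $(A_i)_{i}\mapsto\{n\in\mathbb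 N: A_n\text{ has non-empty interior}\}$, defined on all sequences of closed sets with $\bigcup_i A_i=X$. *)

From Stdlib Require Import Reals List Arith Cantor.
Import ListNotations.
Open Scope R_scope.

Definition Baire := nat -> nat.

Definition cpair (x y : nat) : nat := Cantor.to_nat (x, y).

Fixpoint enc (l : list nat) : nat :=
  match l with
  | [] => 0%nat
  | x :: l' => S (cpair x (enc l'))
  end.

Definition prefix (p : Baire) (k : nat) : list nat := map p (seq 0 k).

Definition bpair (p q : Baire) : Baire :=
  fun n => if Nat.even n then p (Nat.div2 n) else q (Nat.div2 n).

Inductive code : Type :=
| Zero : code
| Succ : code
| Proj : nat -> code
| Comp : code -> list code -> code
| Prec : code -> code -> code
| Mu   : code -> code.

Inductive eval : code -> list nat -> nat -> Prop :=
| ev_zero : forall args, eval Zero args 0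
| ev_succ : forall x args, eval Succ (x :: args) (S x)
| ev_proj : forall i args x, nth_error args i = Some x -> eval (Proj i) args x
| ev_comp : forall f gs args ys y,
    evals gs args ys -> eval f ys y -> eval (Comp f gs) args y
| ev_prec0 : forall f g args y, eval f args y -> eval (Prec f g) (0%nat :: args) y
| ev_precS : forall f g n args z y,
    eval (Prec f g) (n :: args) z -> eval g (n :: z :: args) y ->
    eval (Prec f g) (S n :: args) y
| ev_mu : forall f args n,
    eval f (n :: args) 0 ->
    (forall m, (m < n)%nat -> exists k, eval f (m :: args) (S k)) ->
    eval (Mu f) args n
with evals : list code -> list nat -> list nat -> Prop :=
| evs_nil : forall args, evals [] args []
| evs_cons : forall g gs args y ys,
    eval g args y -> evals gs args ys -> evals (g :: gs) args (y :: ys).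

(** A partial function is a functional relation; its domain is the set of
    inputs having an output. *)
Definition pfun := Baire -> Baire -> Prop.
Definition functional (F : pfun) : Prop :=
  forall p q1 q2, F p q1 -> F p q2 -> q1 = q2.

(** Type-2 computability: F is computable iff there is a partial recursive
    function phi such that for every p in dom(F) with output q, for every n
    and k, phi(n, p|k) is defined and equals 0 ("no answer yet") or q(n)+1,
    and for every n some prefix p|k yields the answer q(n)+1. *)
Definition computable_pfun (F : pfun) : Prop :=
  functional F /\
  exists e : code, forall p q, F p q ->
    (forall n k, exists y, eval e [n; enc (prefix p k)] y /\
                           (y = 0%nat \/ y = S (q n))) /\
    (forall n, exists k, eval e [n; enc (prefix p k)] (S (q n))).

(** A representation of X is given as a relation [delta : Baire -> X -> Prop]
    ([delta p x] : "p is a name of x"). *)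
Record mvmap (X Y : Type) := MVMap {
  mdom : X -> Prop;
  mval : X -> Y -> Prop
}.
Arguments mdom {X Y} _ _.
Arguments mval {X Y} _ _ _.

Definition realizer {X Y : Type} (dX : Baire -> X -> Prop)
    (dY : Baire -> Y -> Prop) (f : mvmap X Y) (F : pfun) : Prop :=
  functional F /\
  forall p x, dX p x -> mdom f x ->
    exists q, F p q /\ exists y, dY q y /\ mval f x y.

Definition weihrauch_le {X Y Z W : Type}
    (dX : Baire -> X -> Prop) (dY : Baire -> Y -> Prop) (f : mvmap X Y)
    (dZ : Baire -> Z -> Prop) (dW : Baire -> W -> Prop) (g : mvmap Z W) : Prop :=
  exists H K : pfun, computable_pfun H /\ computable_pfun K /\
    forall G : pfun, realizer dZ dW g G ->
      realizer dX dY f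
        (fun p r => exists k gk, K p k /\ G k gk /\ H (bpair p gk) r).

Definition weihrauch_eq {X Y Z W : Type}
    (dX : Baire -> X -> Prop) (dY : Baire -> Y -> Prop) (f : mvmap X Y)
    (dZ : Baire -> Z -> Prop) (dW : Baire -> W -> Prop) (g : mvmap Z W) : Prop :=
  weihrauch_le dX dY f dZ dW g /\ weihrauch_le dZ dW g dX dY f.

Definition delta_nat (p : Baire) (n : nat) : Prop := p 0%nat = n.

Definition delta_AN (p : Baire) (A : nat -> Prop) : Prop :=
  forall n, ~ A n <-> exists k, p k = S n.

Record metric_space (M : Type) (d : M -> M -> R) : Prop := {
  ms_nonneg : forall x y, 0 <= d x y;
  ms_zero   : forall x y, d x y = 0 <-> x = y;
  ms_sym    : forall x y, d x y = d y x;
  ms_tri    : forall x y z, d x z <= d x y + d y z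
}.

Definition complete_metric {M : Type} (d : M -> M -> R) : Prop :=
  forall u : nat -> M,
    (forall eps, eps > 0 -> exists N, forall n m, (n >= N)%nat -> (m >= N)%nat ->
       d (u n) (u m) < eps) ->
    exists x, forall eps, eps > 0 -> exists N, forall n, (n >= N)%nat -> d (u n) x < eps.

Definition rat_code (m : nat) (q : R) : Prop :=
  exists a b c, m = cpair a (cpair b c) /\ q = (INR a - INR b) / (INR c + 1).

Definition nnrat_code (m : nat) (r : R) : Prop :=
  exists a c, m = cpair a c /\ r = INR a / (INR c + 1).

Definition computable_metric_space {M : Type} (d : M -> M -> R) (alpha : nat -> M) : Prop :=
  metric_space M d /\
  (forall x eps, eps > 0 -> exists n, d x (alpha n) < eps) /\
  exists e : code, forall i j k, exists m q,
    eval e [i; j; k] m /\ rat_code m q /\ Rabs (q - d (alpha i) (alpha j)) < / 2 ^ k.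

Definition in_ball {M : Type} (d : M -> M -> R) (alpha : nat -> M) (b : nat) (x : M) : Prop :=
  exists n r rr, b = cpair n r /\ nnrat_code r rr /\ d x (alpha n) < rr.

Definition delta_AX {M : Type} (d : M -> M -> R) (alpha : nat -> M)
    (p : Baire) (A : M -> Prop) : Prop :=
  forall x, ~ A x <-> exists k b, p k = S b /\ in_ball d alpha b x.

Definition delta_seq {T : Type} (delta : Baire -> T -> Prop)
    (p : Baire) (A : nat -> T) : Prop :=
  forall i, delta (fun k => p (cpair i k)) (A i).

Definition C_N : mvmap (nat -> Prop) nat :=
  {| mdom := fun A => exists n, A n;
     mval := fun A n => A n |}.

Definition nonempty_interior {M : Type} (d : M -> M -> R) (A : M -> Prop) : Prop :=
  exists x r, r > 0 /\ forall y, d x y < r -> A y.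

Definition BCT {M : Type} (d : M -> M -> R) : mvmap (nat -> (M -> Prop)) nat :=
  {| mdom := fun A => forall x, exists i, A i x;
     mval := fun A n => nonempty_interior d (A n) |}.

(** Both reductions are given by total maps on Baire space whose [n]-th output only
    depends on one input position, chosen primitive recursively from [n]; such maps are
    computable ([computable_local]).

    [C_N <= BCT_X]: a name of [A ⊆ N] becomes a name of the sequence [A_i = X] for
    [i ∈ A] and [A_i = ∅] otherwise; an index with non-empty interior lies in [A].

    [BCT_X <= C_N]: a candidate [(i, b)], [b] a rational ball, claims [b ⊆ A_i].  It is
    refuted when [b] has radius zero or some point of the dense sequence lies in [b] and in
    a ball enumerated into [X \ A_i]; this is semi-decidable from the distance
    approximations, so the unrefuted candidates form a closed subset of [N].  Unrefuted
    candidates are correct answers, and by the Baire category theorem (proved here from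
    completeness through nested balls) some candidate is unrefuted. *)

From Pilot Require Import Defs.
From Stdlib Require Import Reals Lra Lia List Cantor Classical ClassicalEpsilon.
Import ListNotations.

Local Open Scope nat_scope.

(** ** Primitive recursive functions *)

Definition v (i : nat) (a : list nat) : nat := nth i a 0.

Definition PR (n : nat) (f : list nat -> nat) : Prop :=
  exists c, forall a, length a = n -> eval c a (f a).

Lemma PR_ext n f g : PR n f -> (forall a, length a = n -> f a = g a) -> PR n g.
Proof. intros [c Hc] H. exists c. intros a Ha. rewrite <- H by exact Ha. auto. Qed.

Lemma PR_zero n : PR n (fun _ => 0).
Proof. exists Defs.Zero. intros. constructor. Qed.

Lemma PR_proj n i : i < n -> PR n (v i).
Proof.
  intros Hi. exists (Defs.Proj i). intros a Ha. constructor.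
  apply nth_error_nth'. lia.
Qed.

Lemma PR_comp n m f (gs : list (list nat -> nat)) :
  PR m f -> length gs = m -> Forall (PR n) gs ->
  PR n (fun a => f (map (fun g => g a) gs)).
Proof.
  intros [cf Hf] Hl Hgs.
  assert (Hcs : exists cs, forall a, length a = n -> evals cs a (map (fun g => g a) gs)).
  { clear Hl Hf. induction Hgs as [|g gs [c Hc] _ [cs Hcs]].
    - exists []. intros. constructor.
    - exists (c :: cs). intros a Ha. simpl. constructor; auto. }
  destruct Hcs as [cs Hcs].
  exists (Defs.Comp cf cs). intros a Ha. econstructor.
  - apply Hcs, Ha.
  - apply Hf. rewrite length_map. auto.
Qed.

Lemma PR_succ n f : PR n f -> PR n (fun a => S (f a)).
Proof.
  intros [c Hc]. exists (Defs.Comp Defs.Succ [c]). intros a Ha.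
  econstructor; repeat constructor. apply Hc, Ha.
Qed.

Fixpoint prec (f g : list nat -> nat) (k : nat) (args : list nat) : nat :=
  match k with 0 => f args | S k => g (k :: prec f g k args :: args) end.

Lemma PR_rec n f g : PR n f -> PR (S (S n)) g -> PR (S n) (fun a => prec f g (v 0 a) (tl a)).
Proof.
  intros [cf Hf] [cg Hg]. exists (Defs.Prec cf cg). intros [|x args] Ha; [discriminate|].
  simpl in Ha. injection Ha as Ha. unfold v; simpl.
  induction x; simpl.
  - constructor. auto.
  - econstructor. exact IHx. apply Hg. simpl. lia.
Qed.

Lemma PR_comp1 n h f : PR 1 h -> PR n f -> PR n (fun a => h [f a]).
Proof. intros Hh Hf. apply (PR_comp n 1 h [f]); auto. Qed.
Lemma PR_comp2 n h f g : PR 2 h -> PR n f -> PR n g -> PR n (fun a => h [f a; g a]).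
Proof. intros Hh Hf Hg. apply (PR_comp n 2 h [f; g]); auto. Qed.
Lemma PR_comp3 n h f g k :
  PR 3 h -> PR n f -> PR n g -> PR n k -> PR n (fun a => h [f a; g a; k a]).
Proof. intros Hh Hf Hg Hk. apply (PR_comp n 3 h [f; g; k]); auto. Qed.

Lemma PR_app1 (h : nat -> nat) n x :
  PR 1 (fun a => h (v 0 a)) -> PR n x -> PR n (fun a => h (x a)).
Proof. intros Hh Hx. apply (PR_comp1 n _ x Hh Hx). Qed.
Lemma PR_app2 (h : nat -> nat -> nat) n x y :
  PR 2 (fun a => h (v 0 a) (v 1 a)) -> PR n x -> PR n y -> PR n (fun a => h (x a) (y a)).
Proof. intros Hh Hx Hy. apply (PR_comp2 n _ x y Hh Hx Hy). Qed.
Lemma PR_app3 (h : nat -> nat -> nat -> nat) n x y z :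
  PR 3 (fun a => h (v 0 a) (v 1 a) (v 2 a)) -> PR n x -> PR n y -> PR n z ->
  PR n (fun a => h (x a) (y a) (z a)).
Proof. intros Hh Hx Hy Hz. apply (PR_comp3 n _ x y z Hh Hx Hy Hz). Qed.

Lemma args1 (a : list nat) : length a = 1 -> a = [v 0 a].
Proof. destruct a as [|x [|]]; simpl; intros; try discriminate; reflexivity. Qed.
Lemma args2 (a : list nat) : length a = 2 -> a = [v 0 a; v 1 a].
Proof. destruct a as [|x [|y [|]]]; simpl; intros; try discriminate; reflexivity. Qed.
Lemma args3 (a : list nat) : length a = 3 -> a = [v 0 a; v 1 a; v 2 a].
Proof. destruct a as [|x [|y [|z [|]]]]; simpl; intros; try discriminate; reflexivity. Qed.

Lemma PR_const n c : PR n (fun _ => c).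
Proof. induction c. apply PR_zero. apply (PR_succ n (fun _ => c)); auto. Qed.

Definition ite (c x y : nat) : nat := match c with 0 => y | _ => x end.

Lemma ite_nz c x y : c <> 0 -> ite c x y = x.
Proof. destruct c; simpl; congruence. Qed.

Lemma PR_ite n c x y : PR n c -> PR n x -> PR n y -> PR n (fun a => ite (c a) (x a) (y a)).
Proof.
  apply PR_app3. eapply PR_ext.
  - apply (PR_rec 2 (v 1) (v 2)); apply PR_proj; lia.
  - intros a Ha. rewrite (args3 a Ha). unfold v; simpl. destruct (nth 0 a 0); reflexivity.
Qed.

Lemma PR_add n f g : PR n f -> PR n g -> PR n (fun a => f a + g a).
Proof.
  apply PR_app2. eapply PR_ext.
  - apply (PR_rec 1 (v 0) (fun a => S (v 1 a))); [|apply PR_succ]; apply PR_proj; lia.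
  - intros a Ha. rewrite (args2 a Ha). unfold v; simpl. induction (nth 0 a 0); simpl; auto.
Qed.

Lemma PR_mul n f g : PR n f -> PR n g -> PR n (fun a => f a * g a).
Proof.
  apply PR_app2. eapply PR_ext.
  - apply (PR_rec 1 (fun _ => 0) (fun a => v 1 a + v 2 a)).
    + apply PR_zero.
    + apply PR_add; apply PR_proj; lia.
  - intros a Ha. rewrite (args2 a Ha). unfold v; simpl.
    induction (nth 0 a 0) as [|k IH]; simpl; auto. rewrite IH. unfold v. simpl. lia.
Qed.

Lemma PR_pred n f : PR n f -> PR n (fun a => pred (f a)).
Proof.
  apply PR_app1. eapply PR_ext.
  - apply (PR_rec 0 (fun _ => 0) (v 0)). apply PR_zero. apply PR_proj; lia.
  - intros a Ha. rewrite (args1 a Ha). unfold v; simpl. destruct (nth 0 a 0); reflexivity.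
Qed.

Lemma PR_iter (h : nat -> nat) :
  PR 1 (fun a => h (v 0 a)) -> PR 2 (fun a => Nat.iter (v 0 a) h (v 1 a)).
Proof.
  intros Hh. eapply PR_ext.
  - apply (PR_rec 1 (v 0) (fun a => h (v 1 a))).
    + apply PR_proj; lia.
    + apply PR_app1; auto. apply PR_proj; lia.
  - intros a Ha. rewrite (args2 a Ha). unfold v; simpl.
    induction (nth 0 a 0) as [|k IH]; simpl; congruence.
Qed.

Lemma PR_sub n f g : PR n f -> PR n g -> PR n (fun a => f a - g a).
Proof.
  intros Hf Hg. eapply PR_ext.
  - apply (PR_app2 (fun k x => Nat.iter k pred x) n g f); auto.
    apply PR_iter, PR_pred, PR_proj; lia.
  - intros a _. cbn. generalize (f a). induction (g a) as [|k IH]; intros x; simpl.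
    + lia.
    + rewrite IH. lia.
Qed.

Lemma PR_pow2 n f : PR n f -> PR n (fun a => 2 ^ f a).
Proof.
  apply PR_app1. eapply PR_ext.
  - apply (PR_rec 0 (fun _ => 1) (fun a => v 1 a + v 1 a)).
    + apply PR_const.
    + apply PR_add; apply PR_proj; lia.
  - intros a Ha. rewrite (args1 a Ha). unfold v; simpl.
    induction (nth 0 a 0) as [|k IH]; simpl; auto. rewrite IH. unfold v; simpl. lia.
Qed.

(** [tri w] is the [w]-th triangular number; [cpair x y = y + tri (x + y)]. *)
Definition tri (w : nat) : nat := nat_rec (fun _ => nat) 0 (fun i m => S i + m) w.

Lemma cpair_tri x y : cpair x y = y + tri (y + x).
Proof. reflexivity. Qed.

Lemma PR_tri n f : PR n f -> PR n (fun a => tri (f a)).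
Proof.
  apply PR_app1. eapply PR_ext.
  - apply (PR_rec 0 (fun _ => 0) (fun a => S (v 0 a) + v 1 a)).
    + apply PR_const.
    + apply PR_add; [apply PR_succ|]; apply PR_proj; lia.
  - intros a Ha. rewrite (args1 a Ha). unfold v; simpl.
    induction (nth 0 a 0); simpl; auto.
Qed.

Lemma PR_cpair n f g : PR n f -> PR n g -> PR n (fun a => cpair (f a) (g a)).
Proof.
  intros Hf Hg. eapply PR_ext.
  - apply PR_add; [exact Hg|]. apply PR_tri, PR_add; [exact Hg | exact Hf].
  - intros. rewrite cpair_tri. reflexivity.
Qed.

Fixpoint diag (n : nat) : nat :=
  match n with 0 => 0 | S n => ite (tri (S (diag n)) - S n) (diag n) (S (diag n)) end.

Lemma diag_spec n : tri (diag n) <= n < tri (S (diag n)).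
Proof.
  induction n as [|n IH]; [simpl; lia|].
  change (diag (S n)) with (ite (tri (S (diag n)) - S n) (diag n) (S (diag n))).
  assert (T : tri (S (S (diag n))) = S (S (diag n)) + tri (S (diag n))) by reflexivity.
  destruct (tri (S (diag n)) - S n) eqn:E; unfold ite; lia.
Qed.

Lemma PR_diag n f : PR n f -> PR n (fun a => diag (f a)).
Proof.
  apply PR_app1. eapply PR_ext.
  - apply (PR_rec 0 (fun _ => 0)
             (fun a => ite (tri (S (v 1 a)) - S (v 0 a)) (v 1 a) (S (v 1 a)))).
    + apply PR_const.
    + apply PR_ite; [apply PR_sub; [apply PR_tri|]|..]; repeat apply PR_succ; apply PR_proj; lia.
  - intros a Ha. rewrite (args1 a Ha). unfold v; simpl.
    induction (nth 0 a 0) as [|k IH]; simpl; congruence.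
Qed.

Definition cfst (n : nat) : nat := fst (of_nat n).
Definition csnd (n : nat) : nat := snd (of_nat n).

Lemma of_nat_diag n : of_nat n = (diag n - (n - tri (diag n)), n - tri (diag n)).
Proof.
  pose proof (diag_spec n) as [H1 H2]. change (tri (S (diag n))) with (S (diag n) + tri (diag n)) in H2.
  assert (E : n = cpair (diag n - (n - tri (diag n))) (n - tri (diag n))).
  { rewrite cpair_tri.
    replace (n - tri (diag n) + (diag n - (n - tri (diag n)))) with (diag n) by lia. lia. }
  rewrite E at 1. apply cancel_of_to.
Qed.

Lemma cfst_pair x y : cfst (cpair x y) = x.
Proof. unfold cfst, cpair. rewrite cancel_of_to. reflexivity. Qed.
Lemma csnd_pair x y : csnd (cpair x y) = y.
Proof. unfold csnd, cpair. rewrite cancel_of_to. reflexivity. Qed.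
Lemma cpair_surj n : cpair (cfst n) (csnd n) = n.
Proof. unfold cfst, csnd, cpair. rewrite <- surjective_pairing. apply cancel_to_of. Qed.

Lemma PR_cfst n f : PR n f -> PR n (fun a => cfst (f a)).
Proof.
  intros Hf. eapply PR_ext.
  - apply PR_sub; [apply PR_diag, Hf|]. apply PR_sub; [exact Hf|]. apply PR_tri, PR_diag, Hf.
  - intros. unfold cfst. rewrite of_nat_diag. reflexivity.
Qed.
Lemma PR_csnd n f : PR n f -> PR n (fun a => csnd (f a)).
Proof.
  intros Hf. eapply PR_ext.
  - apply PR_sub; [exact Hf|]. apply PR_tri, PR_diag, Hf.
  - intros. unfold csnd. rewrite of_nat_diag. reflexivity.
Qed.

(** [lookup j c] drops the first [j] entries of the coded list [c]; [lhead] reads its head. *)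
Definition ltail (z : nat) : nat := csnd (z - 1).
Definition lhead (z : nat) : nat := cfst (z - 1).
Definition lookup (j c : nat) : nat := Nat.iter j ltail c.

Lemma PR_lookup n j c : PR n j -> PR n c -> PR n (fun a => lookup (j a) (c a)).
Proof.
  apply PR_app2, PR_iter, PR_csnd, PR_sub; [apply PR_proj; lia | apply PR_const].
Qed.
Lemma PR_lhead n c : PR n c -> PR n (fun a => lhead (c a)).
Proof. intros. apply PR_cfst, PR_sub; auto. apply PR_const. Qed.

Lemma lookup_enc j l : lookup j (enc l) = enc (skipn j l).
Proof.
  revert l. induction j as [|j IH]; intros l; [reflexivity|].
  unfold lookup. rewrite Nat.iter_succ_r. destruct l as [|x l].
  - change (Nat.iter j ltail (ltail (enc []))) with (lookup j (enc [])).
    rewrite IH, !skipn_nil. reflexivity.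
  - unfold ltail. simpl. rewrite Nat.sub_0_r, csnd_pair. apply IH.
Qed.

Lemma lookup_prefix (p : Baire) j k :
  (j < k -> lookup j (enc (prefix p k)) <> 0 /\ lhead (lookup j (enc (prefix p k))) = p j) /\
  (k <= j -> lookup j (enc (prefix p k)) = 0).
Proof.
  rewrite lookup_enc. unfold prefix. split.
  - intros Hjk. replace k with (j + S (k - S j)) by lia. rewrite seq_app, map_app, skipn_app.
    rewrite length_map, length_seq, Nat.sub_diag.
    rewrite skipn_all2 by (rewrite length_map, length_seq; lia). simpl.
    split; [discriminate|]. unfold lhead. simpl. rewrite Nat.sub_0_r. apply cfst_pair.
  - intros Hkj. rewrite skipn_all2; [reflexivity|]. rewrite length_map, length_seq. lia.
Qed.

Ltac pr := repeat first
  [ apply PR_const | apply PR_ite | apply PR_lookup | apply PR_lhead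
  | apply PR_cfst | apply PR_csnd | apply PR_cpair | apply PR_pow2 | apply PR_add
  | apply PR_mul | apply PR_sub | apply PR_succ | (apply PR_proj; lia)
  | (eapply PR_app3; [eassumption|..]) ].

(** A map on Baire space whose [n]-th output is [g n (p (j n))], with [j] and [g]
    primitive recursive, is computable: position [n] is answered once the prefix
    read so far covers position [j n]. *)
Lemma computable_local (j : nat -> nat) (g : nat -> nat -> nat) :
  PR 1 (fun a => j (v 0 a)) -> PR 2 (fun a => g (v 0 a) (v 1 a)) ->
  computable_pfun (fun p q => q = fun n => g n (p (j n))).
Proof.
  intros Hj Hg.
  set (phi := fun a => ite (lookup (j (v 0 a)) (v 1 a))
                          (S (g (v 0 a) (lhead (lookup (j (v 0 a)) (v 1 a))))) 0).
  assert (Hphi : PR 2 phi).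
  { apply PR_ite; [|apply PR_succ, PR_app2; auto|apply PR_const];
      repeat first [apply PR_lookup | apply PR_lhead | apply PR_app1; [exact Hj|]
                   | (apply PR_proj; lia)]. }
  destruct Hphi as [c Hc].
  split; [intros p q1 q2 -> ->; reflexivity|].
  exists c. intros p q ->. split.
  - intros n k. exists (phi [n; enc (prefix p k)]). split; [apply Hc; reflexivity|].
    unfold phi, v; cbn [nth].
    destruct (Nat.lt_ge_cases (j n) k) as [Hlt|Hge].
    + destruct (proj1 (lookup_prefix p (j n) k) Hlt) as [Hnz Hhd].
      right. rewrite (ite_nz _ _ _ Hnz), Hhd. reflexivity.
    + left. rewrite (proj2 (lookup_prefix p (j n) k) Hge). reflexivity.
  - intros n. exists (S (j n)).
    destruct (proj1 (lookup_prefix p (j n) (S (j n))) (Nat.lt_succ_diag_r _)) as [Hnz Hhd].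
    replace (S (g n (p (j n)))) with (phi [n; enc (prefix p (S (j n)))]).
    + apply Hc. reflexivity.
    + unfold phi, v; cbn [nth]. rewrite (ite_nz _ _ _ Hnz), Hhd. reflexivity.
Qed.

Lemma weihrauch_le_of_maps {X Y Z W : Type}
    (dX : Baire -> X -> Prop) (dY : Baire -> Y -> Prop) (f : mvmap X Y)
    (dZ : Baire -> Z -> Prop) (dW : Baire -> W -> Prop) (g : mvmap Z W)
    (Hf Kf : Baire -> Baire) :
  computable_pfun (fun s r => r = Hf s) -> computable_pfun (fun p q => q = Kf p) ->
  (forall p x, dX p x -> mdom f x ->
     exists z, dZ (Kf p) z /\ mdom g z /\
       forall q w, dW q w -> mval g z w -> exists y, dY (Hf (bpair p q)) y /\ mval f x y) ->
  weihrauch_le dX dY f dZ dW g.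
Proof.
  intros HH HK Hred. exists (fun s r => r = Hf s), (fun p q => q = Kf p).
  split; [exact HH|]. split; [exact HK|].
  intros G [HGf HG]. split.
  - intros p r1 r2 (k1 & g1 & -> & Hg1 & ->) (k2 & g2 & -> & Hg2 & ->).
    rewrite (HGf _ _ _ Hg1 Hg2). reflexivity.
  - intros p x Hpx Hx. destruct (Hred p x Hpx Hx) as (z & Hz & Hdz & Hback).
    destruct (HG _ z Hz Hdz) as (q & Hq & w & Hw & Hwz).
    destruct (Hback q w Hw Hwz) as (y & Hy & Hyx).
    exists (Hf (bpair p q)). split; [exists (Kf p), q; auto | eauto].
Qed.

Lemma computable_read_answer : computable_pfun (fun s r => r = fun _ => s 1%nat).
Proof. apply (computable_local (fun _ => 1%nat) (fun _ x => x)); pr. Qed.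

Lemma computable_read_answer_fst : computable_pfun (fun s r => r = fun _ => cfst (s 1%nat)).
Proof. apply (computable_local (fun _ => 1%nat) (fun _ x => cfst x)); pr. Qed.

Local Open Scope R_scope.

Lemma small_pow eps : eps > 0 -> exists N, forall n, (n >= N)%nat -> / 2 ^ n < eps.
Proof.
  intros He. destruct (pow_lt_1_zero (/2) ltac:(rewrite Rabs_pos_eq; lra) eps He) as [N HN].
  exists N. intros n Hn. specialize (HN n Hn). rewrite pow_inv, Rabs_pos_eq in HN; [exact HN|].
  left. apply Rinv_0_lt_compat, pow_lt. lra.
Qed.

Definition ratv (m : nat) : R :=
  (INR (cfst m) - INR (cfst (csnd m))) / (INR (csnd (csnd m)) + 1).

Lemma rat_code_ratv m q : rat_code m q -> q = ratv m.
Proof.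
  intros (a & b & c & -> & ->). unfold ratv. rewrite !cfst_pair, !csnd_pair, cfst_pair.
  reflexivity.
Qed.

(** [test m k a' c'] is non-zero iff [ratv m + 2^-k < a' / (c'+1)]; it decides this
    strict inequality between rationals by cross-multiplying. *)
Definition test (m k a' c' : nat) : nat :=
  ite (S (cfst m * S c' * 2 ^ k + S (csnd (csnd m)) * S c')
       - (a' * S (csnd (csnd m)) * 2 ^ k + cfst (csnd m) * S c' * 2 ^ k)) 0 1.

Lemma test_iff m k a' c' :
  test m k a' c' <> 0%nat <-> ratv m + / 2 ^ k < INR a' / (INR c' + 1).
Proof.
  unfold test, ratv.
  set (A := cfst m). set (B := cfst (csnd m)). set (C := csnd (csnd m)).
  assert (Hnat : test m k a' c' <> 0%nat <->
     (A * S c' * 2 ^ k + S C * S c' < a' * S C * 2 ^ k + B * S c' * 2 ^ k)%nat).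
  { unfold test. fold A B C.
    destruct (S (A * S c' * 2 ^ k + S C * S c') - (a' * S C * 2 ^ k + B * S c' * 2 ^ k))%nat
      eqn:E; simpl; split; intros; try lia; congruence. }
  unfold test in Hnat. fold A B C in Hnat. rewrite Hnat. clear Hnat.
  assert (HC : 0 < INR C + 1) by (pose proof (pos_INR C); lra).
  assert (Hc : 0 < INR c' + 1) by (pose proof (pos_INR c'); lra).
  assert (HP : 0 < 2 ^ k) by (apply pow_lt; lra).
  set (D := (INR C + 1) * (INR c' + 1) * 2 ^ k).
  assert (HD : 0 < D) by (unfold D; repeat apply Rmult_lt_0_compat; auto).
  assert (Hscale : forall X Y, X < Y <-> X * D < Y * D).
  { intros X Y. split; intro H.
    - apply Rmult_lt_compat_r; auto.
    - eapply Rmult_lt_reg_r; eauto. }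
  rewrite Hscale. unfold D.
  replace (((INR A - INR B) / (INR C + 1) + / 2 ^ k) * ((INR C + 1) * (INR c' + 1) * 2 ^ k))
    with ((INR A - INR B) * (INR c' + 1) * 2 ^ k + (INR C + 1) * (INR c' + 1)) by (field; lra).
  replace (INR a' / (INR c' + 1) * ((INR C + 1) * (INR c' + 1) * 2 ^ k))
    with (INR a' * (INR C + 1) * 2 ^ k) by (field; lra).
  split; intro H.
  - apply lt_INR in H. rewrite !plus_INR, !mult_INR, !pow_INR, !S_INR in H. replace (INR 0 + 1 + 1) with 2 in H by (simpl; ring). lra.
  - apply INR_lt. rewrite !plus_INR, !mult_INR, !pow_INR, !S_INR. replace (INR 0 + 1 + 1) with 2 by (simpl; ring). lra.
Qed.

Lemma approx_lt_iff (D : R) (Q : nat -> R) (r : R) :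
  (forall k, Rabs (Q k - D) < / 2 ^ k) ->
  ((exists k, Q k + / 2 ^ k < r) <-> D < r).
Proof.
  intros HQ. split.
  - intros [k Hk]. specialize (HQ k). apply Rabs_def2 in HQ. lra.
  - intros H. destruct (small_pow ((r - D) / 2) ltac:(lra)) as [N HN].
    exists N. specialize (HN N (le_n N)). specialize (HQ N). apply Rabs_def2 in HQ. lra.
Qed.

(** ** Rational balls in a metric space with a dense sequence *)

Section Balls.

Variables (M : Type) (d : M -> M -> R) (alpha : nat -> M).
Hypothesis Hms : metric_space M d.
Hypothesis Hdense : forall x eps, eps > 0 -> exists n, d x (alpha n) < eps.

(** Every natural number is a ball code [cpair center (cpair num den)];
    its radius is [num / (den + 1)]. *)
Definition radius (b : nat) : R := INR (cfst (csnd b)) / (INR (csnd (csnd b)) + 1).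

Lemma in_ball_iff b x : in_ball d alpha b x <-> d x (alpha (cfst b)) < radius b.
Proof.
  unfold radius. split.
  - intros (n & r & rr & -> & (a & c & -> & ->) & H). rewrite !csnd_pair, !cfst_pair. exact H.
  - intros H. exists (cfst b), (csnd b), (radius b). split; [symmetry; apply cpair_surj|].
    split; [|exact H]. exists (cfst (csnd b)), (csnd (csnd b)).
    split; [symmetry; apply cpair_surj | reflexivity].
Qed.

Lemma radius_pos b : cfst (csnd b) <> 0%nat -> 0 < radius b.
Proof.
  intros Hb. unfold radius. apply Rdiv_lt_0_compat.
  - apply lt_0_INR. lia.
  - pose proof (pos_INR (csnd (csnd b))). lra.
Qed.

Lemma in_ball_open b y :
  in_ball d alpha b y -> exists s, s > 0 /\ forall z, d z y < s -> in_ball d alpha b z.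
Proof.
  rewrite in_ball_iff. intros Hy. exists (radius b - d y (alpha (cfst b))). split; [lra|].
  intros z Hz. apply in_ball_iff. pose proof (ms_tri _ _ Hms z y (alpha (cfst b))). lra.
Qed.

Lemma balls_meet_dense b b' y :
  in_ball d alpha b y -> in_ball d alpha b' y ->
  exists m, in_ball d alpha b (alpha m) /\ in_ball d alpha b' (alpha m).
Proof.
  rewrite !in_ball_iff. intros Hb Hb'.
  pose proof (Rmin_l (radius b - d y (alpha (cfst b))) (radius b' - d y (alpha (cfst b')))).
  pose proof (Rmin_r (radius b - d y (alpha (cfst b))) (radius b' - d y (alpha (cfst b')))).
  set (eps := Rmin (radius b - d y (alpha (cfst b))) (radius b' - d y (alpha (cfst b')))) in *.
  assert (Heps : eps > 0) by (apply Rmin_pos; lra).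
  destruct (Hdense y eps Heps) as [m Hm].
  exists m. rewrite !in_ball_iff.
  pose proof (ms_tri _ _ Hms (alpha m) y (alpha (cfst b))).
  pose proof (ms_tri _ _ Hms (alpha m) y (alpha (cfst b'))).
  rewrite (ms_sym _ _ Hms (alpha m) y) in *. lra.
Qed.

Lemma rational_ball_inside x r :
  r > 0 -> exists b, cfst (csnd b) <> 0%nat /\ forall y, in_ball d alpha b y -> d x y < r.
Proof.
  intros Hr. destruct (small_pow (r / 2) ltac:(lra)) as [N HN]. specialize (HN N (le_n N)).
  destruct (Hdense x (r / 2) ltac:(lra)) as [a Ha].
  exists (cpair a (cpair 1 (2 ^ N - 1))). rewrite !csnd_pair, cfst_pair. split; [discriminate|].
  intros y Hy. apply in_ball_iff in Hy. unfold radius in Hy.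
  rewrite !csnd_pair, !cfst_pair in Hy.
  assert (HN' : INR (2 ^ N - 1) + 1 = 2 ^ N).
  { rewrite <- S_INR. replace (S (2 ^ N - 1)) with (2 ^ N)%nat
      by (pose proof (Nat.pow_nonzero 2 N); lia).
    rewrite pow_INR. reflexivity. }
  rewrite HN' in Hy. simpl INR in Hy.
  pose proof (ms_tri _ _ Hms x (alpha a) y). rewrite (ms_sym _ _ Hms (alpha a) y) in *.
  unfold Rdiv in Hy. lra.
Qed.

Lemma named_complement_open p A y :
  delta_AX d alpha p A -> ~ A y -> exists s, s > 0 /\ forall z, d z y < s -> ~ A z.
Proof.
  intros HpA HnA. destruct (proj1 (HpA y) HnA) as (k & b & Hk & Hb).
  destruct (in_ball_open b y Hb) as (s & Hs & Hsb).
  exists s. split; [exact Hs|]. intros z Hz. apply HpA. exists k, b. auto.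
Qed.

End Balls.

(** ** The Baire category theorem *)

Section Baire.

Variables (M : Type) (d : M -> M -> R).
Hypothesis Hms : metric_space M d.
Hypothesis Hcomplete : complete_metric d.

Lemma nested_balls_meet (c : nat -> M) (r : nat -> R) :
  (forall n, 0 < r n <= / 2 ^ n) ->
  (forall n, d (c (S n)) (c n) + r (S n) <= r n) ->
  exists x, forall n, d x (c n) <= r n.
Proof.
  intros Hr Hstep.
  assert (Hnest : forall n k, d (c (n + k)%nat) (c n) + r (n + k)%nat <= r n).
  { intros n k. induction k as [|k IH].
    - rewrite Nat.add_0_r, (proj2 (ms_zero _ _ Hms _ _) eq_refl). lra.
    - rewrite Nat.add_succ_r. pose proof (Hstep (n + k)%nat).
      pose proof (ms_tri _ _ Hms (c (S (n + k))) (c (n + k)%nat) (c n)). lra. }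
  assert (Hdist : forall n m, (n <= m)%nat -> d (c m) (c n) < r n).
  { intros n m Hnm. replace m with (n + (m - n))%nat by lia.
    pose proof (Hnest n (m - n)%nat). pose proof (Hr (n + (m - n))%nat). lra. }
  destruct (Hcomplete c) as [x Hx].
  { intros eps He. destruct (small_pow eps He) as [N HN]. exists N. intros n m Hn Hm.
    destruct (Nat.le_ge_cases n m) as [H|H].
    - rewrite (ms_sym _ _ Hms). pose proof (Hdist n m H). pose proof (Hr n).
      pose proof (HN n Hn). lra.
    - pose proof (Hdist m n H). pose proof (Hr m). pose proof (HN m Hm). lra. }
  exists x. intros n. apply Rnot_lt_le. intros Hlt.
  destruct (Hx (d x (c n) - r n) ltac:(lra)) as [N HN].
  specialize (HN (Nat.max N n) (Nat.le_max_l _ _)).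
  pose proof (Hdist n (Nat.max N n) (Nat.le_max_r _ _)).
  pose proof (ms_tri _ _ Hms x (c (Nat.max N n)) (c n)).
  rewrite (ms_sym _ _ Hms x (c (Nat.max N n))) in *. lra.
Qed.

Lemma avoid_nowhere_dense (A : M -> Prop) x r :
  (forall y, ~ A y -> exists s, s > 0 /\ forall z, d z y < s -> ~ A z) ->
  (forall x r, r > 0 -> exists y, d x y < r /\ ~ A y) ->
  r > 0 ->
  exists y s, 0 < s /\ s <= r / 2 /\ d y x + s <= r /\ forall z, d z y <= s -> ~ A z.
Proof.
  intros Hopen Hempty Hr.
  destruct (Hempty x (r / 2) ltac:(lra)) as (y & Hy & HnA).
  destruct (Hopen y HnA) as (s & Hs & Hsy).
  exists y, (Rmin (r / 2) (s / 2)).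
  pose proof (Rmin_l (r / 2) (s / 2)). pose proof (Rmin_r (r / 2) (s / 2)).
  rewrite (ms_sym _ _ Hms y x).
  split; [apply Rmin_pos; lra|]. split; [lra|]. split; [lra|].
  intros z Hz. apply Hsy. lra.
Qed.

Theorem baire_category (A : nat -> M -> Prop) :
  (forall i y, ~ A i y -> exists s, s > 0 /\ forall z, d z y < s -> ~ A i z) ->
  (forall x, exists i, A i x) -> inhabited M ->
  exists i x r, r > 0 /\ forall y, d x y < r -> A i y.
Proof.
  intros Hopen Hcov [x0]. apply NNPP. intros Hno.
  assert (Hempty : forall i x r, r > 0 -> exists y, d x y < r /\ ~ A i y).
  { intros i x r Hr. apply NNPP. intros Hn. apply Hno. exists i, x, r. split; [exact Hr|].
    intros y Hy. apply NNPP. intros HA. apply Hn. exists y. auto. }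
  (* A choice of a smaller closed ball avoiding A_i inside each ball. *)
  destruct (ClassicalEpsilon.choice (fun (ixr : nat * (M * R)) (ys : M * R) =>
      0 < snd (snd ixr) -> 0 < snd ys /\ snd ys <= snd (snd ixr) / 2 /\
      d (fst ys) (fst (snd ixr)) + snd ys <= snd (snd ixr) /\
      forall z, d z (fst ys) <= snd ys -> ~ A (fst ixr) z)) as [shrink Hshrink].
  { intros [i [x r]]. destruct (Rlt_dec 0 r) as [Hr|Hr].
    - destruct (avoid_nowhere_dense (A i) x r (Hopen i) (Hempty i) Hr) as (y & s & Hys).
      exists (y, s). intros _. exact Hys.
    - exists (x, r). intros H. contradiction. }
  set (ball := fix ball (n : nat) : M * R :=
         match n with 0%nat => (x0, 1) | S n => shrink (n, ball n) end).
  assert (Hpos : forall n, 0 < snd (ball n) <= / 2 ^ n).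
  { induction n as [|n IH]; [simpl; lra|].
    destruct (Hshrink (n, ball n) (proj1 IH)) as (H1 & H2 & _).
    simpl snd in *.
    rewrite <- tech_pow_Rmult, Rinv_mult. lra. }
  destruct (nested_balls_meet (fun n => fst (ball n)) (fun n => snd (ball n)) Hpos)
    as [x Hx].
  { intros n. apply (Hshrink (n, ball n) (proj1 (Hpos n))). }
  destruct (Hcov x) as [i Hi].
  destruct (Hshrink (i, ball i) (proj1 (Hpos i))) as (_ & _ & _ & Havoid).
  exact (Havoid x (Hx (S i)) Hi).
Qed.

End Baire.

(** ** [C_N <= BCT_X] *)

Section CN_to_BCT.

Variables (M : Type) (d : M -> M -> R) (alpha : nat -> M).
Hypothesis Hms : metric_space M d.
Hypothesis Hdense : forall x eps, eps > 0 -> exists n, d x (alpha n) < eps.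

Definition sel_eq (x y u : nat) : nat := ite ((x - y) + (y - x)) 0 u.

Lemma sel_eq_spec x y u : sel_eq x y u <> 0%nat -> x = y /\ sel_eq x y u = u.
Proof. unfold sel_eq. destruct (x - y + (y - x))%nat eqn:E; simpl; [split; lia | congruence]. Qed.

(** From a name [p] of [A ⊆ N], position [cpair i (cpair j b)] enumerates the ball
    [b] into the complement of the [i]-th set exactly when [p j] reveals [i ∉ A]. *)
Definition indicator_names (p : Baire) : Baire :=
  fun t => sel_eq (p (cfst (csnd t))) (S (cfst t)) (S (csnd (csnd t))).

Lemma computable_indicator_names : computable_pfun (fun p q => q = indicator_names p).
Proof.
  apply (computable_local (fun t => cfst (csnd t))
           (fun t x => sel_eq x (S (cfst t)) (S (csnd (csnd t))))); unfold sel_eq; pr.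
Qed.

Lemma indicator_names_spec p (A : nat -> Prop) :
  delta_AN p A -> delta_seq (delta_AX d alpha) (indicator_names p) (fun i _ => A i).
Proof.
  intros HpA i x. split.
  - intros HnA. destruct (proj1 (HpA i) HnA) as [j Hj].
    destruct (Hdense x 1 ltac:(lra)) as [n Hn].
    exists (cpair j (cpair n (cpair 1 0))), (cpair n (cpair 1 0)). split.
    + unfold indicator_names, sel_eq. rewrite !csnd_pair, !cfst_pair, Hj, Nat.sub_diag.
      reflexivity.
    + apply in_ball_iff. unfold radius. rewrite !csnd_pair, !cfst_pair. simpl INR. lra.
  - intros (k & b & Hk & _). apply HpA. exists (cfst k).
    unfold indicator_names in Hk. rewrite cfst_pair, csnd_pair in Hk.
    destruct (sel_eq_spec _ _ _ ltac:(rewrite Hk; discriminate)) as [E _]. exact E.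
Qed.

Lemma CN_le_BCT :
  weihrauch_le delta_AN delta_nat C_N (delta_seq (delta_AX d alpha)) delta_nat (BCT d).
Proof.
  apply (weihrauch_le_of_maps _ _ _ _ _ _ (fun s _ => s 1%nat) indicator_names
           computable_read_answer computable_indicator_names).
  intros p A HpA [i0 Hi0]. exists (fun i _ => A i).
  split; [apply indicator_names_spec, HpA|]. split; [intros x; exists i0; exact Hi0|].
  intros q n Hqn (x & r & Hr & Hin). exists n. split; [exact Hqn|].
  apply (Hin x). rewrite (proj2 (ms_zero _ _ Hms x x) eq_refl). lra.
Qed.

End CN_to_BCT.

(** ** [BCT_X <= C_N] *)

Section BCT_to_CN.

Variables (M : Type) (d : M -> M -> R) (alpha : nat -> M).
Hypothesis Hms : metric_space M d.
Hypothesis Hdense : forall x eps, eps > 0 -> exists n, d x (alpha n) < eps.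

Variable F : nat -> nat -> nat -> nat.
Hypothesis HF : PR 3 (fun a => F (v 0 a) (v 1 a) (v 2 a)).
Hypothesis HFapprox : forall i j k, Rabs (ratv (F i j k) - d (alpha i) (alpha j)) < / 2 ^ k.

Definition in_ball_at (m b k : nat) : nat :=
  test (F m (cfst b) k) k (cfst (csnd b)) (csnd (csnd b)).

Lemma in_ball_at_iff m b :
  (exists k, in_ball_at m b k <> 0%nat) <-> in_ball d alpha b (alpha m).
Proof.
  rewrite in_ball_iff. unfold radius.
  rewrite <- (approx_lt_iff _ (fun k => ratv (F m (cfst b) k)) _ (HFapprox m (cfst b))).
  unfold in_ball_at. split; intros [k Hk]; exists k; apply test_iff; exact Hk.
Qed.

(** A candidate [n = cpair i b] claims that the rational ball [b] lies in [A_i].  An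
    index [t = cpair n (cpair m (cpair j (cpair k1 k2)))] refutes it when [b] has radius
    zero, or when [alpha m] lies in [b] and in the ball read at position [j] of the name
    of [A_i] (certified at precisions [k1], [k2]); [x] is the entry read there. *)
Definition t_ball (t : nat) : nat := csnd (cfst t).
Definition t_point (t : nat) : nat := cfst (csnd t).
Definition t_pos (t : nat) : nat := cpair (cfst (cfst t)) (cfst (csnd (csnd t))).
Definition t_prec1 (t : nat) : nat := cfst (csnd (csnd (csnd t))).
Definition t_prec2 (t : nat) : nat := csnd (csnd (csnd (csnd t))).

Definition refutes (x t : nat) : nat :=
  ite (cfst (csnd (t_ball t)))
    (ite x (ite (in_ball_at (t_point t) (t_ball t) (t_prec1 t))
                (in_ball_at (t_point t) (x - 1) (t_prec2 t)) 0) 0)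
    1.

Lemma refutes_iff x t :
  refutes x t <> 0%nat <->
  cfst (csnd (t_ball t)) = 0%nat \/
  exists b', x = S b' /\ in_ball_at (t_point t) (t_ball t) (t_prec1 t) <> 0%nat /\
             in_ball_at (t_point t) b' (t_prec2 t) <> 0%nat.
Proof.
  unfold refutes. destruct (cfst (csnd (t_ball t))) as [|a]; simpl.
  { split; [left; reflexivity | discriminate]. }
  destruct x as [|b']; simpl.
  { split; [congruence|]. intros [H|(b' & H & _)]; discriminate. }
  rewrite Nat.sub_0_r.
  destruct (in_ball_at (t_point t) (t_ball t) (t_prec1 t)); simpl.
  - split; [congruence|]. intros [H|(b'' & _ & H & _)]; [discriminate | congruence].
  - split.
    + intros H. right. exists b'. split; [reflexivity|]. split; [discriminate | exact H].
    + intros [H|(b'' & E & _ & H)]; [discriminate|]. injection E as ->. exact H.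
Qed.

Definition refutations (p : Baire) : Baire :=
  fun t => ite (refutes (p (t_pos t)) t) (S (cfst t)) 0.

Lemma computable_refutations : computable_pfun (fun p q => q = refutations p).
Proof.
  apply (computable_local t_pos (fun t x => ite (refutes x t) (S (cfst t)) 0));
    unfold t_pos, refutes, in_ball_at, test, t_ball, t_point, t_prec1, t_prec2; pr.
Qed.

Definition refuted (p : Baire) (n : nat) : Prop :=
  cfst (csnd (csnd n)) = 0%nat \/
  exists m j b', p (cpair (cfst n) j) = S b' /\
    in_ball d alpha (csnd n) (alpha m) /\ in_ball d alpha b' (alpha m).

Lemma refutations_spec p n : (exists t, refutations p t = S n) <-> refuted p n.
Proof.
  unfold refutations, refuted. split.
  - intros [t Ht]. destruct (refutes (p (t_pos t)) t) eqn:Hr; [discriminate|].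
    simpl in Ht. injection Ht as <-.
    destruct (proj1 (refutes_iff (p (t_pos t)) t) ltac:(rewrite Hr; discriminate))
      as [H|(b' & Hb' & H1 & H2)]; [left; exact H | right].
    exists (t_point t), (cfst (csnd (csnd t))), b'. split; [exact Hb'|].
    split; apply in_ball_at_iff; eexists; eassumption.
  - intros [H|(m & j & b' & Hb' & H1 & H2)].
    + exists (cpair n 0). rewrite ite_nz; [rewrite cfst_pair; reflexivity|].
      apply refutes_iff. left. unfold t_ball. rewrite cfst_pair. exact H.
    + destruct (proj2 (in_ball_at_iff m (csnd n)) H1) as [k1 Hk1].
      destruct (proj2 (in_ball_at_iff m b') H2) as [k2 Hk2].
      exists (cpair n (cpair m (cpair j (cpair k1 k2)))).
      rewrite ite_nz; [rewrite cfst_pair; reflexivity|]. apply refutes_iff. right.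
      unfold t_pos, t_ball, t_point, t_prec1, t_prec2. rewrite !csnd_pair, !cfst_pair.
      exists b'. auto.
Qed.

Section Name.

Variable A : nat -> M -> Prop.
Variable p : Baire.
Hypothesis HpA : delta_seq (delta_AX d alpha) p A.

Lemma unrefuted_interior n : ~ refuted p n -> nonempty_interior d (A (cfst n)).
Proof.
  intros Hn. set (b := csnd n).
  assert (Hb : cfst (csnd b) <> 0%nat) by (intros E; apply Hn; left; exact E).
  exists (alpha (cfst b)), (radius b). split; [apply radius_pos, Hb|].
  intros y Hy. apply NNPP. intros HnA.
  destruct (proj1 (HpA (cfst n) y) HnA) as (j & b' & Hj & Hb').
  assert (Hyb : in_ball d alpha b y)
    by (apply in_ball_iff; rewrite (ms_sym _ _ Hms); exact Hy).
  destruct (balls_meet_dense _ _ _ Hms Hdense b b' y Hyb Hb') as (m & H1 & H2).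
  apply Hn. right. exists m, j, b'. auto.
Qed.

(** By the Baire category theorem, some candidate is never refuted. *)
Lemma exists_unrefuted :
  complete_metric d -> inhabited M -> (forall x, exists i, A i x) -> exists n, ~ refuted p n.
Proof.
  intros Hc Hne Hcov.
  destruct (baire_category M d Hms Hc A
              (fun i y => named_complement_open _ _ _ Hms _ _ y (HpA i)) Hcov Hne)
    as (i & x & r & Hr & Hin).
  destruct (rational_ball_inside _ _ _ Hms Hdense x r Hr) as (b & Hb & Hbin).
  exists (cpair i b). unfold refuted. rewrite cfst_pair, csnd_pair.
  intros [H|(m & j & b' & Hj & H1 & H2)]; [exact (Hb H)|].
  apply (proj2 (HpA i (alpha m))); [exists j, b'; auto|].
  apply Hin, Hbin, H1.
Qed.

End Name.

Lemma BCT_le_CN :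
  complete_metric d -> inhabited M ->
  weihrauch_le (delta_seq (delta_AX d alpha)) delta_nat (BCT d) delta_AN delta_nat C_N.
Proof.
  intros Hc Hne.
  apply (weihrauch_le_of_maps _ _ _ _ _ _ (fun s _ => cfst (s 1%nat)) refutations
           computable_read_answer_fst computable_refutations).
  intros p A HpA Hcov. exists (fun n => ~ refuted p n). split; [|split].
  - intros n. rewrite refutations_spec. split; [apply NNPP | tauto].
  - apply (exists_unrefuted A p HpA Hc Hne Hcov).
  - intros q n Hqn Hn. exists (cfst n). split.
    + unfold delta_nat, bpair. simpl. rewrite Hqn. reflexivity.
    + apply (unrefuted_interior A p HpA n Hn).
Qed.

End BCT_to_CN.

Lemma distance_approximations {M : Type} (d : M -> M -> R) (alpha : nat -> M) (e : code) :
  (forall i j k, exists m q,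
     eval e [i; j; k] m /\ rat_code m q /\ Rabs (q - d (alpha i) (alpha j)) < / 2 ^ k) ->
  exists F : nat -> nat -> nat -> nat, PR 3 (fun a => F (v 0 a) (v 1 a) (v 2 a)) /\
    forall i j k, Rabs (ratv (F i j k) - d (alpha i) (alpha j)) < / 2 ^ k.
Proof.
  intros He.
  destruct (ClassicalEpsilon.choice (fun (ijk : nat * nat * nat) m =>
      let '(i, j, k) := ijk in
      eval e [i; j; k] m /\ Rabs (ratv m - d (alpha i) (alpha j)) < / 2 ^ k)) as [G HG].
  { intros [[i j] k]. destruct (He i j k) as (m & q & H1 & H2 & H3).
    exists m. rewrite <- (rat_code_ratv m q H2). auto. }
  exists (fun i j k => G (i, j, k)). split.
  - exists e. intros a Ha. rewrite (args3 a Ha) at 1. apply (HG (v 0 a, v 1 a, v 2 a)).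
  - intros i j k. apply (HG (i, j, k)).
Qed.

Theorem theorem5p2 (M : Type) (d : M -> M -> R) (alpha : nat -> M)
  (Hcms : computable_metric_space d alpha)
  (Hcomplete : complete_metric d)
  (Hne : inhabited M) :
  weihrauch_eq (delta_seq (delta_AX d alpha)) delta_nat (BCT d)
               delta_AN delta_nat C_N.
Proof.
  destruct Hcms as (Hms & Hdense & e & He).
  destruct (distance_approximations d alpha e He) as (F & HF & HFapprox).
  split.
  - exact (BCT_le_CN M d alpha Hms Hdense F HF HFapprox Hcomplete Hne).
  - exact (CN_le_BCT M d alpha Hms Hdense).
Qed.
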